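(* Let $\mathcal A,\mathcal B,H$ be groups, $\gamma:\mathcal A\to\mathcal B$ a surjective homomorphism, and $T_\gamma\subseteq\mathcal A$ a section of $\gamma$ (so $\gamma|_{T_\gamma}:T_\gamma\to\mathcal B$ is a bijection). For $\phi\in H^{\mathcal A}$ define $\phi_\gamma\in H^{\mathcal B}$ by $\phi_\gamma(\gamma(x))=\phi(x)$ for $x\in T_\gamma$, and for $\alpha\in\mathcal A$ write $\alpha_\gamma=\gamma(\alpha)$. Let $F$ be the free group on $k+n$ letters, $p\in F$, and $(\bar\phi,\bar\alpha)\in(H\wr\mathcal A)^{k+n}$, with $\bar\phi_\gamma,\bar\alpha_\gamma$ defined coordinatewise. Write $p(\bar\phi,\bar\alpha)=(\psi,p(\bar\alpha))$ with $\psi\in H^{\mathcal A}$ and $p(\bar\phi_\gamma,\bar\alpha_\gamma)=(\tilde\psi,\gamma(p(\bar\alpha)))$ with $\tilde\psi\in H^{\mathcal B}$. Let $S=\mathrm{Suf}(p)$. If $x\in\mathcal A$ satisfies $xS(\bar\alpha)\subseteq T_\gamma$, then $\psi(x)=\tilde\psi(\gamma(x))$.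
   Context: For a reduced word $p$ in the free group, $\mathrm{Suf}(p)$ denotes the set of all initial subwords of $p$ (including the empty word $1$ and $p$ itself); e.g. $\mathrm{Suf}(x^2yx^{-1})=\{1,x,x^2,x^2y,x^2yx^{-1}\}$. For $S\subseteq F$ and $\bar\alpha\in\mathcal A^{k+n}$, $S(\bar\alpha)=\{q(\bar\alpha): q\in S\}$. The wreath product $H\wr Q$ is $H^Q\rtimes Q$ with $(g.f)(x)=f(xg)$ and multiplication $(f,g)(f',g')=(f\,(g.f'),gg')$; for $\bar\phi=(\phi_1,\dots,\phi_{k+n})$ and $\bar\alpha=(\alpha_1,\dots,\alpha_{k+n})$, $(\bar\phi,\bar\alpha)$ denotes $((\phi_1,\alpha_1),\dots,(\phi_{k+n},\alpha_{k+n}))$. *)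

From mathcomp Require Import all_boot.
Set Implicit Arguments. Unset Strict Implicit. Unset Printing Implicit Defensive.

Record group := Group {
  gcar :> Type;
  gmul : gcar -> gcar -> gcar;
  gone : gcar;
  ginv : gcar -> gcar;
  gmulA : forall x y z, gmul x (gmul y z) = gmul (gmul x y) z;
  gmul1g : forall x, gmul gone x = x;
  gmulg1 : forall x, gmul x gone = x;
  gmulVg : forall x, gmul (ginv x) x = gone;
  gmulgV : forall x, gmul x (ginv x) = gone
}.

Definition is_hom (A B : group) (f : A -> B) : Prop :=
  forall x y, f (gmul x y) = gmul (f x) (f y).

Definition is_section (A B : group) (gamma : A -> B) (T : A -> Prop) : Prop :=
  (forall b : B, exists x, T x /\ gamma x = b) /\
  (forall x y, T x -> T y -> gamma x = gamma y -> x = y).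

(* Words in the free group on m letters: letter (i, true) = a_i,
   (i, false) = a_i^{-1}. *)
Definition word (m : nat) := seq ('I_m * bool).

Definition reduced (m : nat) (w : word m) : bool :=
  all (fun pr : ('I_m * bool) * ('I_m * bool) =>
         ~~ ((pr.1.1 == pr.2.1) && (pr.1.2 != pr.2.2)))
      (zip w (behead w)).

Definition eval_word (X : Type) (mul : X -> X -> X) (one : X) (inv : X -> X)
  (m : nat) (a : 'I_m -> X) (w : word m) : X :=
  foldr (fun l acc => mul (if l.2 then a l.1 else inv (a l.1)) acc) one w.

Definition geval (G : group) (m : nat) (a : 'I_m -> G) (w : word m) : G :=
  eval_word (@gmul G) (gone G) (@ginv G) a w.

(* Suf(p): all initial subwords of p, including the empty word and p. *)
Definition Suf (m : nat) (p : word m) : seq (word m) :=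
  [seq take i p | i <- iota 0 (size p).+1].

(* Wreath product H wr Q = H^Q x| Q, (g.f)(x) = f(xg),
   (f,g)(f',g') = (f (g.f'), gg'). *)
Definition wr_mul (H Q : group) (u v : (Q -> H) * Q) : (Q -> H) * Q :=
  (fun x => gmul (u.1 x) (v.1 (gmul x u.2)), gmul u.2 v.2).
Definition wr_one (H Q : group) : (Q -> H) * Q := (fun _ => gone H, gone Q).
Definition wr_inv (H Q : group) (u : (Q -> H) * Q) : (Q -> H) * Q :=
  (fun x => ginv (u.1 (gmul x (ginv u.2))), ginv u.2).

Definition wr_eval (H Q : group) (m : nat) (a : 'I_m -> (Q -> H) * Q)
  (w : word m) : (Q -> H) * Q :=
  eval_word (@wr_mul H Q) (wr_one H Q) (@wr_inv H Q) a w.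

From mathcomp Require Import all_boot.
Set Implicit Arguments. Unset Strict Implicit. Unset Printing Implicit Defensive.

(** Unfolding one letter of a product in [H wr A] shows that [psi(x)] is the
    product, over the letters of [p], of [phi_i] or [phi_i^-1] evaluated at
    [x] times a prefix of [p(alpha)].  Every such point lies in [T], where
    [phi_i] and [(phi_i)_gamma] agree, and [gamma] maps it to the
    corresponding point of the evaluation in [H wr B]. *)

Definition letter (X : Type) (inv : X -> X) (m : nat) (a : 'I_m -> X)
    (l : 'I_m * bool) : X :=
  if l.2 then a l.1 else inv (a l.1).

Lemma eval_word_cons (X : Type) (mul : X -> X -> X) (one : X) (inv : X -> X)
    (m : nat) (a : 'I_m -> X) (l : 'I_m * bool) (w : word m) :
  eval_word mul one inv a (l :: w) = mul (letter inv a l) (eval_word mul one inv a w).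
Proof. by []. Qed.

Lemma mem_Suf_nil (m : nat) (w : word m) : [::] \in Suf w.
Proof. by apply/mapP; exists 0; [rewrite mem_iota | case: w]. Qed.

Lemma mem_Suf_cons (m : nat) (l : 'I_m * bool) (w q : word m) :
  q \in Suf w -> l :: q \in Suf (l :: w).
Proof.
move/mapP=> [i iw ->]; apply/mapP; exists i.+1 => //.
by move: iw; rewrite !mem_iota.
Qed.

Lemma hom1 (A B : group) (f : A -> B) : is_hom f -> f (gone A) = gone B.
Proof.
move=> fM; have e := fM (gone A) (gone A); rewrite gmul1g in e.
have := congr1 (gmul (ginv (f (gone A)))) e.
by rewrite gmulA gmulVg gmul1g => <-.
Qed.

Lemma homV (A B : group) (f : A -> B) (a : A) : is_hom f -> f (ginv a) = ginv (f a).
Proof.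
move=> fM; have e := fM (ginv a) a; rewrite gmulVg hom1 // in e.
have := congr1 (fun z => gmul z (ginv (f a))) e.
by rewrite -gmulA gmulgV gmulg1 gmul1g => ->.
Qed.

Lemma hom_letter (A B : group) (f : A -> B) (m : nat) (a : 'I_m -> A)
    (l : 'I_m * bool) :
  is_hom f -> f (letter (@ginv A) a l) = letter (@ginv B) (f \o a) l.
Proof. by case: l => i [] fM //=; rewrite homV. Qed.

Lemma wr_letter_snd (H Q : group) (m : nat) (a : 'I_m -> (Q -> H) * Q)
    (l : 'I_m * bool) :
  (letter (@wr_inv H Q) a l).2 = letter (@ginv Q) (fun i => (a i).2) l.
Proof. by case: l => i []. Qed.

Section QuotientWreath.

Variables (A B H : group) (gamma : A -> B) (T : A -> Prop).
Hypothesis gammaM : is_hom gamma.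
Variables (m : nat) (phi : 'I_m -> A -> H) (alpha : 'I_m -> A)
  (phig : 'I_m -> B -> H).
Hypothesis phig_T : forall i t, T t -> phig i (gamma t) = phi i t.

Lemma wr_letter_fst_quotient (l : 'I_m * bool) (x : A) :
  T x -> T (gmul x (letter (@ginv A) alpha l)) ->
  (letter (@wr_inv H A) (fun i => (phi i, alpha i)) l).1 x
  = (letter (@wr_inv H B) (fun i => (phig i, gamma (alpha i))) l).1 (gamma x).
Proof.
case: l => i [] /= Tx Txl; first by rewrite phig_T.
by rewrite -(homV _ gammaM) -gammaM phig_T.
Qed.

Lemma wr_eval_fst_quotient (w : word m) (x : A) :
  (forall q, q \in Suf w -> T (gmul x (geval alpha q))) ->
  (wr_eval (fun i => (phi i, alpha i)) w).1 x
  = (wr_eval (fun i => (phig i, gamma (alpha i))) w).1 (gamma x).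
Proof.
elim: w x => [|l w IHw] x Tpre //.
have Tx : T x by have := Tpre _ (mem_Suf_nil _); rewrite /geval /= gmulg1.
have Txl : T (gmul x (letter (@ginv A) alpha l)).
  by have := Tpre _ (mem_Suf_cons l (mem_Suf_nil w)); rewrite /geval /= gmulg1.
rewrite /wr_eval !eval_word_cons /= !wr_letter_snd.
rewrite wr_letter_fst_quotient // -(hom_letter alpha l gammaM).
rewrite -gammaM IHw // => q qw.
by rewrite -gmulA; apply: (Tpre (l :: q)); apply: mem_Suf_cons.
Qed.

End QuotientWreath.

Theorem lemma3 (A B H : group) (gamma : A -> B) (Tg : A -> Prop)
  (k n : nat) (p : word (k + n))
  (phi : 'I_(k + n) -> A -> H) (alpha : 'I_(k + n) -> A)
  (phig : 'I_(k + n) -> B -> H) (x : A) :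
  is_hom gamma ->
  (forall b : B, exists a : A, gamma a = b) ->
  is_section gamma Tg ->
  (* phig i = (phi i)_gamma : determined by its values on gamma(Tg) *)
  (forall i (t : A), Tg t -> phig i (gamma t) = phi i t) ->
  reduced p ->
  (forall q, q \in Suf p -> Tg (gmul x (geval alpha q))) ->
  (wr_eval (fun i => (phi i, alpha i)) p).1 x
  = (wr_eval (fun i => (phig i, gamma (alpha i))) p).1 (gamma x).
Proof.
move=> gammaM _ _ phig_T _.
exact: wr_eval_fst_quotient.
Qed.
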